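(* The model (P) is feasible and has an optimal solution at an extreme point of its feasible region.
   Context: Model (P) is a multistage stochastic closed-loop EV battery recycling model. Index sets: zones $\mathcal{Z}$; time periods $t\in\mathcal{T}=\{1,\dots,T\}$; planning periods $l\in\mathcal{L}$, with $\mathcal{T}_l$ the periods of planning period $l$ and $l_t$ the planning period of $t$; stages $\sigma\in\mathcal{S}$ with $\sigma_t$ the stage of period $t$; scenario tree nodes $\Omega_\sigma$ at stage $\sigma$ with probabilities $p_\omega$, and $a_\omega(t)$ the ancestor of node $\omega$ at stage $\sigma_t$; battery chemistries $\mathcal{I}$; recycling processes $\mathcal{J}$; materials $\mathcal{K}$ with cathode powders $\mathcal{K}^{\text{CP}}\subset\mathcal{K}$; recycling facility indices $\mathcal{N}^{\text{REC}}_l$ and cathode production line indices $\mathcal{N}^{\text{CP}}_{l,k}$. Operational variables $x\ge 0$ are indexed by $(\omega,z,t,\cdot)$ with $\omega\in\Omega_{\sigma_t}$; capacity variables $y\ge0$ are $y^{\text{REC}}_{z,l,j,n}$ and $y^{\text{CP}}_{z,l,k,n}$. Constraints (all for $t\in\mathcal{T}$, $z\in\mathcal{Z}$, $\omega\in\Omega_{\sigma_t}$ unless stated): (Production) $\sum_{i} \Delta^{\text{NB}}_{i,k} d_{\omega,z,t,i} = x^{\text{NM,NB}}_{\omega,z,t,k} + x^{\text{INV,NB}}_{\omega,z,t,k}$ for $k\in\mathcal{K}^{\text{CP}}$; $\sum_{i} \Delta^{\text{NB}}_{i,k} d_{\omega,z,t,i} = x^{\text{NM,NB}}_{\omega,z,t,k}$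 for $k\in\mathcal{K}\setminus\mathcal{K}^{\text{CP}}$; $\sum_{k'\in\mathcal{K}^{\text{CP}}}\Delta^{\text{CP}}_{k',k}x^{\text{CP,INV}}_{\omega,z,t,k'} = x^{\text{NM,CP}}_{\omega,z,t,k}+x^{\text{MC,CP}}_{\omega,z,t,k}$ and $\sum_{k'\in\mathcal{K}\setminus\mathcal{K}^{\text{CP}}}\Delta^{\text{MC}}_{k',k}x^{\text{MC,CP}}_{\omega,z,t,k'} = x^{\text{INV,MC}}_{\omega,z,t,k}$ for $k\in\mathcal{K}\setminus\mathcal{K}^{\text{CP}}$; $x^{\text{RM,INV}}_{\omega,z,t,k}+x^{\text{RM,S}}_{\omega,z,t,k}=\sum_{i,j}\Delta^{\text{REC}}_{k,i,j}x^{\text{RB,RM}}_{\omega,z,t,i,j}$ for $k\in\mathcal{K}$. (Inventory balance) $x^{\text{RB}}_{\omega,z,0,i}=0$, $x^{\text{INV}}_{\omega,z,0,k}=0$; with $\omega'=a_\omega(t-1)$: $x^{\text{RB}}_{\omega,z,t,i}=x^{\text{RB}}_{\omega',z,t-1,i}+\sum_{z'\ne z}(x^{\text{TR,RB}}_{\omega,z',z,t,i}-x^{\text{TR,RB}}_{\omega,z,z',t,i})+s_{\omega,z,t,i}-\sum_j x^{\text{RB,RM}}_{\omega,z,t,i,j}$; for $k\in\mathcal{K}\setminus\mathcal{K}^{\text{CP}}$: $x^{\text{INV}}_{\omega,z,t,k}=x^{\text{INV}}_{\omega',z,t-1,k}+\sum_{z'\ne z}(x^{\text{TR,RM}}_{\omega,z',z,t,k}-x^{\text{TR,RM}}_{\omega,z,z',t,k})+x^{\text{RM,INV}}_{\omega,z,t,k}-x^{\text{INV,MC}}_{\omega,z,t,k}$;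 for $k\in\mathcal{K}^{\text{CP}}$: the same with $+x^{\text{RM,INV}}_{\omega,z,t,k}+x^{\text{CP,INV}}_{\omega,z,t,k}-x^{\text{INV,NB}}_{\omega,z,t,k}$ as the last terms. (Capacity) for $t\in\mathcal{T}_l$: $\sum_{n\in\mathcal{N}^{\text{REC}}_l}y^{\text{REC}}_{z,l,j,n}\ge\sum_i x^{\text{RB,RM}}_{\omega,z,t,i,j}$ and $\sum_{n\in\mathcal{N}^{\text{CP}}_{l,k}}y^{\text{CP}}_{z,l,k,n}\ge x^{\text{CP,INV}}_{\omega,z,t,k}$ ($k\in\mathcal{K}^{\text{CP}}$); total capacities $\sum_n y^{\text{REC}}_{z,l,j,n}$ and $\sum_n y^{\text{CP}}_{z,l,k,n}$ are nondecreasing in $l$; $y^{\text{REC}}_{z,l,j,n}\le u^{\text{REC}}$, $y^{\text{CP}}_{z,l,k,n}\le u^{\text{CP}}$. Objective: minimize $\sum_{t}(1-\gamma)^{t-1}\big(C^{\text{PL}}_t(y)+\sum_{\omega\in\Omega_{\sigma_t}}p_\omega C^{\text{OP}}_{\omega,t}(x)\big)$, where the linear operational cost is $C^{\text{OP}}_{\omega,t}(x)=\sum_z\big(\sum_{k}c^{\text{NB,NM}}_{\omega,t,k}x^{\text{NM,NB}}_{\omega,z,t,k}+\sum_{k\notin\mathcal{K}^{\text{CP}}}(c^{\text{CP,NM}}_{\omega,t,k}x^{\text{NM,CP}}_{\omega,z,t,k}+c^{\text{MC}}_{\omega,z,t,k}x^{\text{MC,CP}}_{\omega,z,t,k})+\sum_k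 v_{\omega,t,k}(\rho x^{\text{INV}}_{\omega,z,t,k}-\eta x^{\text{RM,S}}_{\omega,z,t,k})+\sum_{k\in\mathcal{K}^{\text{CP}}}c^{\text{CP}}_{\omega,z,t,k}x^{\text{CP,INV}}_{\omega,z,t,k}+\sum_{i,j}c^{\text{REC}}_{\omega,z,t,i,j}x^{\text{RB,RM}}_{\omega,z,t,i,j}+\sum_{z'\ne z}(\sum_k c^{\text{TR,RM}}_{z,z'}x^{\text{TR,RM}}_{\omega,z,z',t,k}+\sum_i c^{\text{TR,RB}}_{z,z'}x^{\text{TR,RB}}_{\omega,z,z',t,i})\big)$ with $\eta\le1$ and $\rho$ proportions, and the planning cost is $C^{\text{PL}}_t(y)=\sum_z\big(\sum_j\sum_{n\in\mathcal{N}^{\text{REC}}_{l_t}}f^{\text{REC}}_{z,j}(y^{\text{REC}}_{z,l_t,j,n})+\sum_{k\in\mathcal{K}^{\text{CP}}}\sum_{n\in\mathcal{N}^{\text{CP}}_{l_t,k}}f^{\text{CP}}_{z,k}(y^{\text{CP}}_{z,l_t,k,n})\big)$, with each $f(y)=\sum_i q_iy^{r_i}+w$ for $y>0$, $f(0)=0$, $r_i\in(0,1]$, $q_i,w\ge0$. Thus (P) is a separable concave minimization over a polyhedron in the nonnegative orthant. Assumption: the parameters $d,s,c,v,p,\Delta$ are nonnegative, $u^{\text{REC}},u^{\text{CP}}$ are positive, $\gamma\in[0,1)$, and the functions $f$ are concave, monotonic increasing, with $f(0)=0$. *)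

From HB Require Import structures.
From mathcomp Require Import all_boot all_order all_algebra.
From mathcomp Require Import reals.
Import Order.TTheory GRing.Theory Num.Theory.
Local Open Scope ring_scope.

(* Data of the multistage stochastic closed-loop EV battery recycling model *)
(* (P).  Periods are natural numbers t = 1..T; planning periods are 'I_nL,   *)
(* [lt t] is the planning period l_t of period t; [stage t] is sigma_t;      *)
(* [nstage w] is the stage of the scenario-tree node w (so                   *)
(* Omega_sigma = [set w | nstage w == sigma]); [anc w t] is a_w(t), the      *)
(* ancestor of w at stage sigma_t; facility indices are drawn from a finite  *)
(* type NI, N^REC_l = NREC l and N^CP_{l,k} = NCP l k.                       *)
Record model (R : realType) := Model {
  Zn : finType;  (* zones *)
  In : finType;  (* battery chemistries *)
  Jn : finType;  (* recycling processes *)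
  Kn : finType;  (* materials *)
  Om : finType;  (* scenario tree nodes (all stages) *)
  NI : finType;  (* facility / production line indices *)
  KCP : {set Kn};  (* cathode powders *)
  T : nat;
  nL : nat;
  lt : nat -> 'I_nL;
  stage : nat -> nat;
  nstage : Om -> nat;
  anc : Om -> nat -> Om;
  prob : Om -> R;
  NREC : 'I_nL -> {set NI};
  NCP : 'I_nL -> Kn -> {set NI};
  DeltaNB : In -> Kn -> R;
  DeltaCP : Kn -> Kn -> R;
  DeltaMC : Kn -> Kn -> R;
  DeltaREC : Kn -> In -> Jn -> R;
  dem : Om -> Zn -> nat -> In -> R;
  sup : Om -> Zn -> nat -> In -> R;
  cNBNM : Om -> nat -> Kn -> R;
  cCPNM : Om -> nat -> Kn -> R;
  cMC : Om -> Zn -> nat -> Kn -> R;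
  vv : Om -> nat -> Kn -> R;
  rho : R;
  eta : R;
  cCP : Om -> Zn -> nat -> Kn -> R;
  cREC : Om -> Zn -> nat -> In -> Jn -> R;
  cTRRM : Zn -> Zn -> R;
  cTRRB : Zn -> Zn -> R;
  gamma : R;
  uREC : R;
  uCP : R;
  fREC : Zn -> Jn -> R -> R;
  fCP : Zn -> Kn -> R -> R
}.

Arguments Zn {R} m.
Arguments In {R} m.
Arguments Jn {R} m.
Arguments Kn {R} m.
Arguments Om {R} m.
Arguments NI {R} m.
Arguments KCP {R} m.
Arguments T {R} m.
Arguments nL {R} m.
Arguments lt {R} m.
Arguments stage {R} m.
Arguments nstage {R} m.
Arguments anc {R} m.
Arguments prob {R} m.
Arguments NREC {R} m.
Arguments NCP {R} m.
Arguments DeltaNB {R} m.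
Arguments DeltaCP {R} m.
Arguments DeltaMC {R} m.
Arguments DeltaREC {R} m.
Arguments dem {R} m.
Arguments sup {R} m.
Arguments cNBNM {R} m.
Arguments cCPNM {R} m.
Arguments cMC {R} m.
Arguments vv {R} m.
Arguments rho {R} m.
Arguments eta {R} m.
Arguments cCP {R} m.
Arguments cREC {R} m.
Arguments cTRRM {R} m.
Arguments cTRRB {R} m.
Arguments gamma {R} m.
Arguments uREC {R} m.
Arguments uCP {R} m.
Arguments fREC {R} m.
Arguments fCP {R} m.

Set Implicit Arguments. Unset Strict Implicit. Unset Printing Implicit Defensive.

Section Model.
Variables (R : realType) (M : model R).

Definition valid (w : Om M) (t : nat) : bool :=
  (1 <= t <= T M)%N && (nstage M w == stage M t).

Inductive var : Type :=
| vNMNB  (w : Om M) (t : nat) (z : Zn M) (k : Kn M) of valid w t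
| vINVNB (w : Om M) (t : nat) (z : Zn M) (k : Kn M) of valid w t && (k \in KCP M)
| vNMCP  (w : Om M) (t : nat) (z : Zn M) (k : Kn M) of valid w t && (k \notin KCP M)
| vMCCP  (w : Om M) (t : nat) (z : Zn M) (k : Kn M) of valid w t && (k \notin KCP M)
| vCPINV (w : Om M) (t : nat) (z : Zn M) (k : Kn M) of valid w t && (k \in KCP M)
| vINVMC (w : Om M) (t : nat) (z : Zn M) (k : Kn M) of valid w t && (k \notin KCP M)
| vRMINV (w : Om M) (t : nat) (z : Zn M) (k : Kn M) of valid w t
| vRMS   (w : Om M) (t : nat) (z : Zn M) (k : Kn M) of valid w t
| vRBRM  (w : Om M) (t : nat) (z : Zn M) (i : In M) (j : Jn M) of valid w t
| vRB    (w : Om M) (t : nat) (z : Zn M) (i : In M) of valid w t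
| vTRRB  (w : Om M) (t : nat) (z z' : Zn M) (i : In M) of valid w t && (z != z')
| vINV   (w : Om M) (t : nat) (z : Zn M) (k : Kn M) of valid w t
| vTRRM  (w : Om M) (t : nat) (z z' : Zn M) (k : Kn M) of valid w t && (z != z')
| vYREC  (z : Zn M) (l : 'I_(nL M)) (j : Jn M) (n : NI M) of n \in NREC M l
| vYCP   (z : Zn M) (l : 'I_(nL M)) (k : Kn M) (n : NI M) of
           (k \in KCP M) && (n \in NCP M l k).

(* dependent access: value of [F h] if [b] holds, 0 otherwise *)
Definition dget (b : bool) (F : b = true -> R) : R :=
  (if b as b0 return (b = b0 -> R) then fun h => F h else fun _ => 0) erefl.

Variable x : var -> R.

Definition NMNB w t z k := dget (fun h => x (@vNMNB w t z k h)).
Definition INVNB w t z k := dget (fun h => x (@vINVNB w t z k h)).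
Definition NMCP w t z k := dget (fun h => x (@vNMCP w t z k h)).
Definition MCCP w t z k := dget (fun h => x (@vMCCP w t z k h)).
Definition CPINV w t z k := dget (fun h => x (@vCPINV w t z k h)).
Definition INVMC w t z k := dget (fun h => x (@vINVMC w t z k h)).
Definition RMINV w t z k := dget (fun h => x (@vRMINV w t z k h)).
Definition RMS w t z k := dget (fun h => x (@vRMS w t z k h)).
Definition RBRM w t z i j := dget (fun h => x (@vRBRM w t z i j h)).
Definition RB w t z i := dget (fun h => x (@vRB w t z i h)).
Definition TRRB w t z z' i := dget (fun h => x (@vTRRB w t z z' i h)).
Definition INV w t z k := dget (fun h => x (@vINV w t z k h)).
Definition TRRM w t z z' k := dget (fun h => x (@vTRRM w t z z' k h)).
Definition YREC z l j n := dget (fun h => x (@vYREC z l j n h)).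
Definition YCP z l k n := dget (fun h => x (@vYCP z l k n h)).

(* Feasible region of (P).  Values at t = 0 (x^RB_{w,z,0,i}, x^INV_{w,z,0,k})
   are 0: [RB]/[INV] return 0 at t = 0 since (w,0) is not [valid]. *)
Definition feasible : Prop :=
  (forall v, 0 <= x v) /\
  (forall w t z k, valid w t -> k \in KCP M ->
     \sum_(i : In M) DeltaNB M i k * dem M w z t i = NMNB w t z k + INVNB w t z k) /\
  (forall w t z k, valid w t -> k \notin KCP M ->
     \sum_(i : In M) DeltaNB M i k * dem M w z t i = NMNB w t z k) /\
  (forall w t z k, valid w t -> k \notin KCP M ->
     \sum_(k' in KCP M) DeltaCP M k' k * CPINV w t z k' = NMCP w t z k + MCCP w t z k) /\
  (forall w t z k, valid w t -> k \notin KCP M ->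
     \sum_(k' in ~: KCP M) DeltaMC M k' k * MCCP w t z k' = INVMC w t z k) /\
  (forall w t z k, valid w t ->
     RMINV w t z k + RMS w t z k =
     \sum_(i : In M) \sum_(j : Jn M) DeltaREC M k i j * RBRM w t z i j) /\
  (forall w t z i, valid w t ->
     RB w t z i = RB (anc M w t.-1) t.-1 z i
       + \sum_(z' | z' != z) (TRRB w t z' z i - TRRB w t z z' i)
       + sup M w z t i - \sum_(j : Jn M) RBRM w t z i j) /\
  (forall w t z k, valid w t -> k \notin KCP M ->
     INV w t z k = INV (anc M w t.-1) t.-1 z k
       + \sum_(z' | z' != z) (TRRM w t z' z k - TRRM w t z z' k)
       + RMINV w t z k - INVMC w t z k) /\
  (forall w t z k, valid w t -> k \in KCP M ->
     INV w t z k = INV (anc M w t.-1) t.-1 z k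
       + \sum_(z' | z' != z) (TRRM w t z' z k - TRRM w t z z' k)
       + RMINV w t z k + CPINV w t z k - INVNB w t z k) /\
  (forall w t z j, valid w t ->
     \sum_(i : In M) RBRM w t z i j <= \sum_(n in NREC M (lt M t)) YREC z (lt M t) j n) /\
  (forall w t z k, valid w t -> k \in KCP M ->
     CPINV w t z k <= \sum_(n in NCP M (lt M t) k) YCP z (lt M t) k n) /\
  (forall z j (l l' : 'I_(nL M)), (l <= l')%N ->
     \sum_(n in NREC M l) YREC z l j n <= \sum_(n in NREC M l') YREC z l' j n) /\
  (forall z k (l l' : 'I_(nL M)), k \in KCP M -> (l <= l')%N ->
     \sum_(n in NCP M l k) YCP z l k n <= \sum_(n in NCP M l' k) YCP z l' k n) /\
  (forall z l j n (h : n \in NREC M l), x (@vYREC z l j n h) <= uREC M) /\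
  (forall z l k n (h : (k \in KCP M) && (n \in NCP M l k)),
     x (@vYCP z l k n h) <= uCP M).

Definition Cop (w : Om M) (t : nat) : R :=
  \sum_(z : Zn M)
   ( \sum_(k : Kn M) cNBNM M w t k * NMNB w t z k
   + \sum_(k in ~: KCP M) (cCPNM M w t k * NMCP w t z k + cMC M w z t k * MCCP w t z k)
   + \sum_(k : Kn M) vv M w t k * (rho M * INV w t z k - eta M * RMS w t z k)
   + \sum_(k in KCP M) cCP M w z t k * CPINV w t z k
   + \sum_(i : In M) \sum_(j : Jn M) cREC M w z t i j * RBRM w t z i j
   + \sum_(z' | z' != z)
       (\sum_(k : Kn M) cTRRM M z z' * TRRM w t z z' k
        + \sum_(i : In M) cTRRB M z z' * TRRB w t z z' i) ).

Definition Cpl (t : nat) : R :=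
  \sum_(z : Zn M)
   ( \sum_(j : Jn M) \sum_(n in NREC M (lt M t)) fREC M z j (YREC z (lt M t) j n)
   + \sum_(k in KCP M) \sum_(n in NCP M (lt M t) k) fCP M z k (YCP z (lt M t) k n) ).

Definition objective : R :=
  \sum_(1 <= t < (T M).+1)
    (1 - gamma M) ^+ t.-1 *
      (Cpl t + \sum_(w : Om M | nstage M w == stage M t) prob M w * Cop w t).

End Model.

Definition concave_nonneg (R : realType) (f : R -> R) : Prop :=
  forall a b lam : R, 0 <= a -> 0 <= b -> 0 <= lam <= 1 ->
    lam * f a + (1 - lam) * f b <= f (lam * a + (1 - lam) * b).

Definition nondecreasing_nonneg (R : realType) (f : R -> R) : Prop :=
  forall a b : R, 0 <= a -> a <= b -> f a <= f b.

Definition model_assumption (R : realType) (M : model R) : Prop :=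
  (forall i k, 0 <= DeltaNB M i k) /\ (forall k k', 0 <= DeltaCP M k k') /\
  (forall k k', 0 <= DeltaMC M k k') /\ (forall k i j, 0 <= DeltaREC M k i j) /\
  (forall w z t i, 0 <= dem M w z t i) /\ (forall w z t i, 0 <= sup M w z t i) /\
  (forall w t k, 0 <= cNBNM M w t k) /\ (forall w t k, 0 <= cCPNM M w t k) /\
  (forall w z t k, 0 <= cMC M w z t k) /\ (forall w t k, 0 <= vv M w t k) /\
  (forall w z t k, 0 <= cCP M w z t k) /\ (forall w z t i j, 0 <= cREC M w z t i j) /\
  (forall z z', 0 <= cTRRM M z z') /\ (forall z z', 0 <= cTRRB M z z') /\
  (forall w, 0 <= prob M w) /\
  0 <= rho M <= 1 /\ 0 <= eta M <= 1 /\
  0 < uREC M /\ 0 < uCP M /\ 0 <= gamma M < 1 /\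
  (forall z j, concave_nonneg (fREC M z j) /\ nondecreasing_nonneg (fREC M z j)
               /\ fREC M z j 0 = 0) /\
  (forall z k, concave_nonneg (fCP M z k) /\ nondecreasing_nonneg (fCP M z k)
               /\ fCP M z k 0 = 0).

Definition extreme_point (R : realType) (V : Type) (S : (V -> R) -> Prop)
    (x : V -> R) : Prop :=
  S x /\
  forall (a b : V -> R) (lam : R), S a -> S b -> 0 < lam < 1 ->
    (forall v, x v = lam * a v + (1 - lam) * b v) ->
    forall v, a v = x v /\ b v = x v.

(* (P) minimises a concave function over a polyhedron lying in the nonnegative orthant, hence
   containing no line. It is feasible: buy all material new and keep every collected battery in
   stock. The objective is bounded below, since the only negative cost, selling recovered
   material, is capped by the recycling capacity. From a feasible point that is not extreme, move
   along a direction keeping its tight constraints tight until one more constraint becomes tight: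
   if this happens on both sides, concavity makes one of the two end points no worse; if only on
   one side, boundedness below makes that end point no worse. Repeating this reaches an extreme
   point no worse than the start. An extreme point is determined by its set of tight
   constraints, so there are finitely many, and the best of them is optimal. *)

From Pilot Require Import Defs.
From HB Require Import structures.
From mathcomp Require Import all_boot all_order all_algebra.
From mathcomp Require Import reals boolp.
From mathcomp Require Import ring lra.
Import Order.TTheory GRing.Theory Num.Theory.
Local Open Scope ring_scope.
Set Implicit Arguments. Unset Strict Implicit. Unset Printing Implicit Defensive.

Lemma exists_min_finite_key (X : Type) (I : finType) (d : Order.disp_t) (T : orderType d)
    (P : X -> Prop) (key : X -> I) (r : X -> T) :
  (forall x y, P x -> P y -> key x = key y -> r x = r y) -> (exists x, P x) ->
  exists x, P x /\ forall y, P y -> (r x <= r y)%O.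
Proof.
move=> keyE [x0 Px0].
pose hit k := exists x, P x /\ key x = k.
pose rep k := if pselect (hit k) is left h then sval (cid h) else x0.
have repP k : hit k -> P (rep k) /\ key (rep k) = k.
  by rewrite /rep; case: pselect => // h _; exact: svalP (cid h).
have hit_key y : P y -> `[< hit (key y) >] by move=> Py; apply/asboolP; exists y.
case: (arg_minP (fun k => r (rep k)) (P := fun k => `[< hit k >]) (hit_key _ Px0)).
move=> k /asboolP /repP [Pk _] kmin.
exists (rep k); split=> // y Py.
have [Pry kry] := repP _ (asboolW (hit_key _ Py)).
by rewrite -(keyE _ _ Pry Py kry); exact: kmin (hit_key _ Py).
Qed.

Section Affine.
Variables (R : realType) (V : Type).
Implicit Types (x y a : V -> R) (F G : (V -> R) -> R).

Definition line x y (s : R) : V -> R := fun v => x v + s * (y v - x v).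

Definition affine F := forall x y s, F (line x y s) = F x + s * (F y - F x).

Lemma affine_cst c : affine (fun _ => c).
Proof. by move=> x y s; rewrite subrr mulr0 addr0. Qed.

Lemma affineD F G : affine F -> affine G -> affine (fun x => F x + G x).
Proof. by move=> hF hG x y s; rewrite hF hG; ring. Qed.

Lemma affineN F : affine F -> affine (fun x => - F x).
Proof. by move=> hF x y s; rewrite hF; ring. Qed.

Lemma affineMl c F : affine F -> affine (fun x => c * F x).
Proof. by move=> hF x y s; rewrite hF; ring. Qed.

Lemma affine_if (b : bool) F G :
  affine F -> affine G -> affine (fun x => if b then F x else G x).
Proof. by case: b. Qed.

Lemma affine_sum (I : Type) (r : seq I) (P : pred I) (F : I -> (V -> R) -> R) :
  (forall i, affine (F i)) -> affine (fun x => \sum_(i <- r | P i) F i x).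
Proof.
move=> hF x y s; elim: r => [|i r IH]; first by rewrite !big_nil; ring.
by rewrite !big_cons; case: (P i); rewrite // IH hF; ring.
Qed.

Lemma affine_eq F G x y s : affine F -> affine G -> F x = G x -> F y = G y ->
  F (line x y s) = G (line x y s).
Proof. by move=> hF hG ex ey; rewrite hF hG ex ey. Qed.

Lemma line_reflect x a s : line x (line x a (-1)) s = line x a (- s).
Proof. by apply: funext => v; rewrite /line; ring. Qed.

Lemma nonneg_line_free (S : (V -> R) -> Prop) : (forall x, S x -> forall v, 0 <= x v) ->
  forall x a, (forall s, S (line x a s)) -> x = a.
Proof.
move=> S_ge0 x a Sxa; apply: funext => v; apply: contrapT => /eqP xav.
have := S_ge0 _ (Sxa (- (x v + 1) / (a v - x v))) v.
by rewrite /line -mulrA mulVf ?mulr1 ?subr_eq0 1?eq_sym //; lra.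
Qed.

Definition concave_on (S : (V -> R) -> Prop) F :=
  forall x y l, S x -> S y -> 0 <= l <= 1 -> F x + l * (F y - F x) <= F (line x y l).

Section ConcaveOn.
Variable S : (V -> R) -> Prop.

Lemma concave_on_affine F : affine F -> concave_on S F.
Proof. by move=> hF x y l _ _ _; rewrite hF. Qed.

Lemma concave_onD F G :
  concave_on S F -> concave_on S G -> concave_on S (fun x => F x + G x).
Proof.
move=> hF hG x y l Sx Sy l01.
by have := hF x y l Sx Sy l01; have := hG x y l Sx Sy l01; lra.
Qed.

Lemma concave_onMl c F : 0 <= c -> concave_on S F -> concave_on S (fun x => c * F x).
Proof.
move=> c0 hF x y l Sx Sy l01; have := ler_wpM2l c0 (hF x y l Sx Sy l01).
by congr (_ <= _); ring.
Qed.

Lemma concave_on_sum (I : Type) (r : seq I) (P : pred I) (F : I -> (V -> R) -> R) :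
  (forall i, concave_on S (F i)) -> concave_on S (fun x => \sum_(i <- r | P i) F i x).
Proof.
move=> hF x y l Sx Sy l01; elim: r => [|i r IH].
  by rewrite !big_nil subrr mulr0 addr0.
by rewrite !big_cons; case: (P i) => //; have := hF i x y l Sx Sy l01; lra.
Qed.

End ConcaveOn.

Definition sum_fam (A B : Type) (g1 : A -> (V -> R) -> R) (g2 : B -> (V -> R) -> R)
    (c : A + B) : (V -> R) -> R :=
  match c with inl a => g1 a | inr b => g2 b end.

Definition all_nonpos (A : Type) (g : A -> (V -> R) -> R) x := forall c, g c x <= 0.

Lemma all_nonpos_sum (A B : Type) (g1 : A -> (V -> R) -> R) (g2 : B -> (V -> R) -> R) x :
  all_nonpos (sum_fam g1 g2) x = (all_nonpos g1 x /\ all_nonpos g2 x).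
Proof.
apply: propext; split=> [h|[h1 h2] []//].
by split=> c; [exact: h (inl c) | exact: h (inr c)].
Qed.

Lemma affine_sum_fam (A B : Type) (g1 : A -> (V -> R) -> R) (g2 : B -> (V -> R) -> R) :
  (forall i, affine (g1 i)) -> (forall j, affine (g2 j)) ->
  forall c, affine (sum_fam g1 g2 c).
Proof. by move=> h1 h2 []. Qed.

End Affine.

Section ConcaveMinimization.
Variables (R : realType) (V : Type) (C : finType).
Variables (E : (V -> R) -> Prop) (g : C -> (V -> R) -> R) (f : (V -> R) -> R).
Implicit Types (x y a e : V -> R).

Definition polyhedron x := E x /\ all_nonpos g x.
Local Notation S := polyhedron.

Definition tight x := [set c | g c x == 0].
Definition slack x := [set c | g c x < 0].

Hypothesis E_line : forall x y s, E x -> E y -> E (line x y s).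
Hypothesis g_affine : forall c, affine (g c).
Hypothesis line_free : forall x a, (forall s, S (line x a s)) -> x = a.
Hypothesis f_concave : concave_on S f.
Hypothesis f_bounded : exists K, forall x, S x -> K <= f x.

Lemma g_reflect c x a : g c (line x a (-1)) = g c x - (g c a - g c x).
Proof. by rewrite g_affine; ring. Qed.

Lemma tight_reflect x a : tight x \subset tight a -> tight x \subset tight (line x a (-1)).
Proof.
move=> /subsetP xa; apply/subsetP => c cx; have := xa c cx.
by move: cx; rewrite !inE g_reflect => /eqP -> /eqP ->; rewrite subrr subr0.
Qed.

Lemma slack_line_sub x a s : S x -> tight x \subset tight a ->
  slack (line x a s) \subset slack x.
Proof.
move=> [_ gx] /subsetP xa; apply/subsetP => c; rewrite !inE g_affine => cs.
rewrite lt_neqAle gx andbT; apply: contraTneq cs => c0.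
have /xa : c \in tight x by rewrite inE c0.
rewrite inE c0 => /eqP ->.
by rewrite subrr mulr0 addr0 ltxx.
Qed.

Lemma polyhedron_ray x a : S x -> E a -> (forall c, g c a <= g c x) ->
  forall s, 0 <= s -> S (line x a s).
Proof.
move=> [Ex gx] Ea ax s s0; split=> [|c]; first exact: E_line.
by rewrite g_affine; have := gx c; have := ax c; nra.
Qed.

(* Ratio test: step until the first constraint becomes tight. *)
Lemma exit_line x a : S x -> E a -> tight x \subset tight a ->
  (exists c, g c x < g c a) ->
  exists2 s, 0 < s & S (line x a s) /\ slack (line x a s) \proper slack x.
Proof.
move=> Sx Ea xa [c0 c0a]; have [Ex gx] := Sx.
pose r c := - g c x / (g c a - g c x).
case: (arg_minP r (P := fun c => g c x < g c a) c0a) => c1 c1a c1min.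
have c1x : g c1 x < 0.
  rewrite lt_neqAle gx andbT; apply: contraTneq c1a => c1x.
  have /(subsetP xa) : c1 \in tight x by rewrite inE c1x.
  by rewrite inE c1x => /eqP ->; rewrite ltxx.
have s_gt0 : 0 < r c1 by rewrite divr_gt0 ?oppr_gt0 ?subr_gt0.
have g_c1 : g c1 (line x a (r c1)) = 0.
  by rewrite g_affine -mulrA mulVf ?mulr1 ?addrN // subr_eq0 gt_eqF.
exists (r c1) => //; split.
  split=> [|c]; first exact: E_line.
  rewrite g_affine; have [ca|ac] := lerP (g c a) (g c x).
    by have := gx c; nra.
  by have := c1min c ac; rewrite ler_pdivlMr ?subr_gt0 //; lra.
rewrite properEneq slack_line_sub // andbT; apply/eqP => e.
have : c1 \in slack x by rewrite inE.
by rewrite -e inE g_c1 ltxx.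
Qed.

Lemma concave_chord x a s t : 0 < s -> 0 < t ->
  S (line x a (- s)) -> S (line x a t) ->
  s * f (line x a t) + t * f (line x a (- s)) <= (s + t) * f x.
Proof.
move=> s0 t0 Sy Sz.
have st0 : 0 < s + t by rewrite addr_gt0.
have th01 : 0 <= s / (s + t) <= 1.
  by rewrite divr_ge0 ?(ltW s0) ?(ltW st0) //= ler_pdivrMr // mul1r lerDl ltW.
have xE : line (line x a (- s)) (line x a t) (s / (s + t)) = x.
  by apply: funext => v; rewrite /line; field; rewrite gt_eqF.
have := f_concave Sy Sz th01; rewrite xE -(ler_pM2l st0).
set fy := f (line x a (- s)); set fz := f (line x a t).
suff -> : (s + t) * (fy + s / (s + t) * (fz - fy)) = s * fz + t * fy by [].
by field; rewrite gt_eqF.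
Qed.

(* Were [f] larger at [line x a t] than at [x], concavity would make it decrease linearly along
   the backward ray, below any bound. *)
Lemma concave_ray_le x a t : 0 < t -> S x -> S (line x a t) ->
  (forall s, 0 <= s -> S (line x a (- s))) -> f (line x a t) <= f x.
Proof.
move=> t0 Sx Sz ray; have [K HK] := f_bounded.
rewrite leNgt; apply/negP => lt_xz.
have Kx := HK _ Sx.
set d := f (line x a t) - f x.
have d0 : 0 < d by rewrite subr_gt0.
set s := t * (f x - K + 1) / d.
have s0 : 0 < s by rewrite divr_gt0 // mulr_gt0 //; lra.
have sd : s * d = t * (f x - K + 1) by rewrite /s -mulrA mulVf ?mulr1 // gt_eqF.
have := concave_chord s0 t0 (ray _ (ltW s0)) Sz.
have := HK _ (ray _ (ltW s0)); rewrite /d in sd; nra.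
Qed.

Lemma slack_descent_forward x a : S x -> E a -> tight x \subset tight a ->
  (exists c, g c x < g c a) ->
  exists x1, [/\ S x1, slack x1 \proper slack x & f x1 <= f x].
Proof.
move=> Sx Ea xa fwd.
have [s1 s1_gt0 [Sx1 sl1]] := exit_line Sx Ea xa fwd.
have [le_x1|lt_x1] := lerP (f (line x a s1)) (f x); first by exists (line x a s1).
have Ea' : E (line x a (-1)) by apply: E_line => //; case: Sx.
have [[c ca]|no_back] := pselect (exists c, g c a < g c x).
  have back : exists c, g c x < g c (line x a (-1)).
    by exists c; rewrite g_reflect; lra.
  have [s2 s2_gt0] := exit_line Sx Ea' (tight_reflect xa) back.
  rewrite line_reflect => -[Sx2 sl2].
  exists (line x a (- s2)); split=> //.
  by have := concave_chord s2_gt0 s1_gt0 Sx2 Sx1; nra.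
suff : f (line x a s1) <= f x by rewrite leNgt lt_x1.
apply: concave_ray_le => // s s0; rewrite -line_reflect.
apply: polyhedron_ray => // c; rewrite g_reflect.
have : ~ g c a < g c x by move=> ca; apply: no_back; exists c.
by move/negP; rewrite -leNgt; lra.
Qed.

Lemma slack_descent x a : S x -> E a -> a <> x -> tight x \subset tight a ->
  exists x1, [/\ S x1, slack x1 \proper slack x & f x1 <= f x].
Proof.
move=> Sx Ea ax xa; have [Ex gx] := Sx.
have [fwd|no_fwd] := pselect (exists c, g c x < g c a).
  exact: slack_descent_forward Sx Ea xa fwd.
have [[c ca]|no_back] := pselect (exists c, g c a < g c x).
  apply: (slack_descent_forward Sx (E_line (-1) Ex Ea) (tight_reflect xa)).
  by exists c; rewrite g_reflect; lra.
have ga c : g c a = g c x.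
  apply/eqP; rewrite eq_le !leNgt.
  by apply/andP; split; apply/negP => h; [apply: no_fwd | apply: no_back]; exists c.
case: ax; apply/esym/line_free => s; split=> [|c]; first exact: E_line.
by rewrite g_affine ga subrr mulr0 addr0.
Qed.

Lemma tight_sub_of_convex x a b lam : S a -> S b -> 0 < lam < 1 ->
  (forall v, x v = lam * a v + (1 - lam) * b v) -> tight x \subset tight a.
Proof.
move=> [_ ga] [_ gb] /andP [lam0 lam1] xE.
have -> : x = line b a lam by apply: funext => v; rewrite xE /line; ring.
apply/subsetP => c; rewrite !inE g_affine => /eqP gx.
by apply/eqP; have := ga c; have := gb c; nra.
Qed.

Lemma not_extreme_direction x : S x -> ~ extreme_point S x ->
  exists a, [/\ E a, a <> x & tight x \subset tight a].
Proof.
move=> Sx; apply: contra_notP => no_dir; split=> // a b lam Sa Sb lam01 xE.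
have ax : a = x.
  apply: contrapT => ax; apply: no_dir; exists a; split=> //; first by case: Sa.
  exact: tight_sub_of_convex Sa Sb lam01 xE.
move=> v; split; first by rewrite ax.
have := xE v; rewrite ax; case/andP: lam01 => _ lam1 xv.
by apply: (@mulfI _ (1 - lam)); [rewrite subr_eq0 gt_eqF | lra].
Qed.

Lemma exists_extreme_le x : S x -> exists e, extreme_point S e /\ f e <= f x.
Proof.
have [n lt_n] := ubnP #|slack x|; elim: n x lt_n => // n IH x hn Sx.
have [ex|/(not_extreme_direction Sx) [a [Ea ax xa]]] := pselect (extreme_point S x).
  by exists x.
have [x1 [Sx1 sl1 fx1]] := slack_descent Sx Ea ax xa.
have [|e [ee fe]] := IH x1 _ Sx1; first exact: leq_trans (proper_card sl1) hn.
by exists e; split=> //; apply: le_trans fe fx1.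
Qed.

(* [e] lies strictly between [y] and a feasible point on the far side of [e] from [y]. *)
Lemma extreme_tight_eq e y :
  extreme_point S e -> S y -> tight e \subset tight y -> y = e.
Proof.
move=> [Se ext] Sy ey; have [[Ee ge] [Ey gy]] := (Se, Sy).
set a := line y e 2.
have Ea : E a by exact: E_line.
have ea : tight e \subset tight a.
  apply/subsetP => c ce; have := subsetP ey c ce.
  by move: ce; rewrite !inE g_affine => /eqP -> /eqP ->; rewrite subrr mulr0 addr0.
have [s s0 Ses] : exists2 s, 0 < s & S (line e a s).
  have [up|no_up] := pselect (exists c, g c e < g c a).
    by have [s s0 []] := exit_line Se Ea ea up; exists s.
  exists 1 => //; apply: polyhedron_ray => // c.
  have : ~ g c e < g c a by move=> h; apply: no_up; exists c.
  by move/negP; rewrite -leNgt.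
have th01 : 0 < (1 + s)^-1 < 1.
  by rewrite invr_gt0 addr_gt0 //= invf_lt1 ?addr_gt0 // ltrDl.
have eE w : e w = (1 + s)^-1 * line e a s w + (1 - (1 + s)^-1) * y w.
  by rewrite /a /line; field; rewrite gt_eqF // addr_gt0.
by apply: funext => v; have [_ ->] := ext _ _ _ Ses Sy th01 eE v.
Qed.

Theorem concave_min_at_extreme_point : (exists x, S x) ->
  exists e, extreme_point S e /\ forall x, S x -> f e <= f x.
Proof.
case=> x0 /exists_extreme_le [e0 [ee0 _]].
have keyE e1 e2 : extreme_point S e1 -> extreme_point S e2 -> tight e1 = tight e2 ->
    f e1 = f e2.
  by move=> ee1 [Se2 _] T12; rewrite (extreme_tight_eq ee1 Se2) // T12.
have [e [ee emin]] := exists_min_finite_key keyE (ex_intro _ e0 ee0).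
exists e; split=> // x /exists_extreme_le [e1 [ee1 fe1]].
exact: le_trans (emin _ ee1) fe1.
Qed.

End ConcaveMinimization.

Section Dget.
Variable R : realType.

Lemma dget_true (b : bool) (h : b = true) (F : b = true -> R) : dget F = F h.
Proof. by move: F h; rewrite /dget; case: b => F h; rewrite ?(eq_irrelevance h erefl). Qed.

Lemma dget_false (b : bool) (F : b = true -> R) : b = false -> dget F = 0.
Proof. by move=> hb; move: F; rewrite /dget hb. Qed.

Lemma dget0 (b : bool) : dget (fun _ : b = true => 0 : R) = 0.
Proof. by rewrite /dget; case: b. Qed.

Lemma dget_ge0 (b : bool) (F : b = true -> R) : (forall h, 0 <= F h) -> 0 <= dget F.
Proof. by rewrite /dget; case: b F. Qed.

Lemma affine_dget (V : Type) (b : bool) (v : b = true -> V) :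
  affine (fun x : V -> R => dget (fun h => x (v h))).
Proof. by rewrite /dget; case: b v => v x y s //; rewrite /line; ring. Qed.

Lemma concave_on_dget (V : Type) (S : (V -> R) -> Prop) (phi : R -> R) (b : bool)
    (v : b = true -> V) :
  (forall x, S x -> forall u, 0 <= x u) -> concave_nonneg phi ->
  concave_on S (fun x => phi (dget (fun h => x (v h)))).
Proof.
move=> S_ge0 phi_cav x y l Sx Sy /andP [l0 l1]; rewrite affine_dget.
have px0 := dget_ge0 (fun h => S_ge0 _ Sx (v h)).
have py0 := dget_ge0 (fun h => S_ge0 _ Sy (v h)).
have := phi_cav _ _ l py0 px0 (introT andP (conj l0 l1)).
by congr (_ <= _); [ring | congr phi; ring].
Qed.

End Dget.

Ltac unfold_vars :=
  rewrite /NMNB /INVNB /NMCP /MCCP /CPINV /INVMC /RMINV /RMS /RBRM /RB /TRRB /INV /TRRM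
          /YREC /YCP.

Ltac affine_tac :=
  unfold_vars; repeat first [ apply: affine_cst | apply: affine_dget | apply: affine_if
    | apply: affineD | apply: affineN | apply: affineMl | apply: affine_sum => ? ].

(* [pattern] splits an equation between expressions in [line x y s] into its two sides. *)
Ltac affine_eq_tac x y s :=
  pattern (line x y s);
  match goal with |- (fun z => @?F z = @?G z) _ =>
    apply: (@affine_eq _ _ F G); [affine_tac | affine_tac | | ] end.

Section ModelPolyhedron.
Variables (R : realType) (M : model R).
Local Notation X := (var M -> R).
Local Notation TT := 'I_(T M).+1.
Local Notation LL := 'I_(nL M).

Definition model_equations (x : X) : Prop :=
  (forall w t z k, valid w t -> k \in KCP M ->
     \sum_(i : In M) DeltaNB M i k * dem M w z t i = NMNB x w t z k + INVNB x w t z k) /\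
  (forall w t z k, valid w t -> k \notin KCP M ->
     \sum_(i : In M) DeltaNB M i k * dem M w z t i = NMNB x w t z k) /\
  (forall w t z k, valid w t -> k \notin KCP M ->
     \sum_(k' in KCP M) DeltaCP M k' k * CPINV x w t z k' = NMCP x w t z k + MCCP x w t z k) /\
  (forall w t z k, valid w t -> k \notin KCP M ->
     \sum_(k' in ~: KCP M) DeltaMC M k' k * MCCP x w t z k' = INVMC x w t z k) /\
  (forall w t z k, valid w t ->
     RMINV x w t z k + RMS x w t z k =
     \sum_(i : In M) \sum_(j : Jn M) DeltaREC M k i j * RBRM x w t z i j) /\
  (forall w t z i, valid w t ->
     RB x w t z i = RB x (anc M w t.-1) t.-1 z i
       + \sum_(z' | z' != z) (TRRB x w t z' z i - TRRB x w t z z' i)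
       + Defs.sup M w z t i - \sum_(j : Jn M) RBRM x w t z i j) /\
  (forall w t z k, valid w t -> k \notin KCP M ->
     INV x w t z k = INV x (anc M w t.-1) t.-1 z k
       + \sum_(z' | z' != z) (TRRM x w t z' z k - TRRM x w t z z' k)
       + RMINV x w t z k - INVMC x w t z k) /\
  (forall w t z k, valid w t -> k \in KCP M ->
     INV x w t z k = INV x (anc M w t.-1) t.-1 z k
       + \sum_(z' | z' != z) (TRRM x w t z' z k - TRRM x w t z z' k)
       + RMINV x w t z k + CPINV x w t z k - INVNB x w t z k).

Lemma model_equations_line x y s :
  model_equations x -> model_equations y -> model_equations (line x y s).
Proof.
move=> [ex1 [ex2 [ex3 [ex4 [ex5 [ex6 [ex7 ex8]]]]]]].
move=> [ey1 [ey2 [ey3 [ey4 [ey5 [ey6 [ey7 ey8]]]]]]].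
split; first by move=> *; affine_eq_tac x y s; [apply: ex1 | apply: ey1].
split; first by move=> *; affine_eq_tac x y s; [apply: ex2 | apply: ey2].
split; first by move=> *; affine_eq_tac x y s; [apply: ex3 | apply: ey3].
split; first by move=> *; affine_eq_tac x y s; [apply: ex4 | apply: ey4].
split; first by move=> *; affine_eq_tac x y s; [apply: ex5 | apply: ey5].
split; first by move=> *; affine_eq_tac x y s; [apply: ex6 | apply: ey6].
split; first by move=> *; affine_eq_tac x y s; [apply: ex7 | apply: ey7].
by move=> *; affine_eq_tac x y s; [apply: ex8 | apply: ey8].
Qed.

Lemma valid_lt w t : valid (M := M) w t -> (t < (T M).+1)%N.
Proof. by case/andP => /andP [_ ]. Qed.

Local Notation wtzk := (Om M * TT * Zn M * Kn M)%type.

(* Indexed by finite types (periods as ordinals), so that the constraint family is finite; an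
   index outside the domain of (P) gives the trivial constraint [0 <= 0]. *)
Definition nonneg_constraints :=
  sum_fam (fun '((w, t, z, k) : wtzk) x => - NMNB x w t z k) (
  sum_fam (fun '((w, t, z, k) : wtzk) x => - INVNB x w t z k) (
  sum_fam (fun '((w, t, z, k) : wtzk) x => - NMCP x w t z k) (
  sum_fam (fun '((w, t, z, k) : wtzk) x => - MCCP x w t z k) (
  sum_fam (fun '((w, t, z, k) : wtzk) x => - CPINV x w t z k) (
  sum_fam (fun '((w, t, z, k) : wtzk) x => - INVMC x w t z k) (
  sum_fam (fun '((w, t, z, k) : wtzk) x => - RMINV x w t z k) (
  sum_fam (fun '((w, t, z, k) : wtzk) x => - RMS x w t z k) (
  sum_fam (fun '((w, t, z, i, j) : Om M * TT * Zn M * In M * Jn M) x =>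
    - RBRM x w t z i j) (
  sum_fam (fun '((w, t, z, i) : Om M * TT * Zn M * In M) x => - RB x w t z i) (
  sum_fam (fun '((w, t, z, z', i) : Om M * TT * Zn M * Zn M * In M) x =>
    - TRRB x w t z z' i) (
  sum_fam (fun '((w, t, z, k) : wtzk) x => - INV x w t z k) (
  sum_fam (fun '((w, t, z, z', k) : Om M * TT * Zn M * Zn M * Kn M) x =>
    - TRRM x w t z z' k) (
  sum_fam (fun '((z, l, j, n) : Zn M * LL * Jn M * NI M) x => - YREC x z l j n)
          (fun '((z, l, k, n) : Zn M * LL * Kn M * NI M) x => - YCP x z l k n)))))))))))))).

Definition capacity_constraints :=
  sum_fam (fun '((w, t, z, j) : Om M * TT * Zn M * Jn M) x =>
    if valid w t then \sum_(i : In M) RBRM x w t z i j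
                      - \sum_(n in NREC M (lt M t)) YREC x z (lt M t) j n else 0) (
  sum_fam (fun '((w, t, z, k) : wtzk) x =>
    if valid w t && (k \in KCP M) then CPINV x w t z k
                      - \sum_(n in NCP M (lt M t) k) YCP x z (lt M t) k n else 0) (
  sum_fam (fun '((z, j, l, l') : Zn M * Jn M * LL * LL) x =>
    if (l <= l')%N then \sum_(n in NREC M l) YREC x z l j n
                      - \sum_(n in NREC M l') YREC x z l' j n else 0) (
  sum_fam (fun '((z, k, l, l') : Zn M * Kn M * LL * LL) x =>
    if (k \in KCP M) && (l <= l')%N then \sum_(n in NCP M l k) YCP x z l k n
                      - \sum_(n in NCP M l' k) YCP x z l' k n else 0) (
  sum_fam (fun '((z, l, j, n) : Zn M * LL * Jn M * NI M) x =>
    if n \in NREC M l then YREC x z l j n - uREC M else 0)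
          (fun '((z, l, k, n) : Zn M * LL * Kn M * NI M) x =>
    if (k \in KCP M) && (n \in NCP M l k) then YCP x z l k n - uCP M else 0))))).

Definition constraints := sum_fam nonneg_constraints capacity_constraints.

Lemma affine_constraints c : affine (constraints c).
Proof.
move: c; rewrite /constraints /nonneg_constraints /capacity_constraints.
by repeat apply: affine_sum_fam; move=> c; repeat case: c => c ?; affine_tac.
Qed.

Lemma nonneg_of_dget (b : bool) (v : b = true -> var M) (x : X) :
  - dget (fun h => x (v h)) <= 0 -> forall h, 0 <= x (v h).
Proof. by rewrite oppr_le0 => + h; rewrite (dget_true h). Qed.

Lemma nonneg_constraintsE x : (forall v, 0 <= x v) <-> all_nonpos nonneg_constraints x.
Proof.
rewrite /nonneg_constraints !all_nonpos_sum; split=> [x_ge0|].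
  by repeat split; move=> c; repeat case: c => c ?; rewrite /= oppr_le0; apply: dget_ge0.
case=> [h1 [h2 [h3 [h4 [h5 [h6 [h7 [h8 [h9 [h10 [h11 [h12 [h13 [h14 h15]]]]]]]]]]]]]].
case=> [w t z k h|w t z k h|w t z k h|w t z k h|w t z k h|w t z k h|w t z k h|w t z k h
       |w t z i j h|w t z i h|w t z z' i h|w t z k h|w t z z' k h|z l j n h|z l k n h].
- exact: nonneg_of_dget (h1 (w, Ordinal (valid_lt h), z, k)) h.
- exact: nonneg_of_dget (h2 (w, Ordinal (valid_lt (andP h).1), z, k)) h.
- exact: nonneg_of_dget (h3 (w, Ordinal (valid_lt (andP h).1), z, k)) h.
- exact: nonneg_of_dget (h4 (w, Ordinal (valid_lt (andP h).1), z, k)) h.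
- exact: nonneg_of_dget (h5 (w, Ordinal (valid_lt (andP h).1), z, k)) h.
- exact: nonneg_of_dget (h6 (w, Ordinal (valid_lt (andP h).1), z, k)) h.
- exact: nonneg_of_dget (h7 (w, Ordinal (valid_lt h), z, k)) h.
- exact: nonneg_of_dget (h8 (w, Ordinal (valid_lt h), z, k)) h.
- exact: nonneg_of_dget (h9 (w, Ordinal (valid_lt h), z, i, j)) h.
- exact: nonneg_of_dget (h10 (w, Ordinal (valid_lt h), z, i)) h.
- exact: nonneg_of_dget (h11 (w, Ordinal (valid_lt (andP h).1), z, z', i)) h.
- exact: nonneg_of_dget (h12 (w, Ordinal (valid_lt h), z, k)) h.
- exact: nonneg_of_dget (h13 (w, Ordinal (valid_lt (andP h).1), z, z', k)) h.
- exact: nonneg_of_dget (h14 (z, l, j, n)) h.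
- exact: nonneg_of_dget (h15 (z, l, k, n)) h.
Qed.

Lemma feasible_polyhedron x : feasible x -> polyhedron model_equations constraints x.
Proof.
case=> x_ge0 [e1 [e2 [e3 [e4 [e5 [e6 [e7 [e8 [c1 [c2 [m1 [m2 [b1 b2]]]]]]]]]]]]].
split; first by do 7 (split=> //).
rewrite /constraints all_nonpos_sum; split; first exact/nonneg_constraintsE.
rewrite /capacity_constraints !all_nonpos_sum; repeat split.
- by case=> [[[w t] z] j] /=; case: ifP => // hv; rewrite subr_le0; exact: c1.
- by case=> [[[w t] z] k] /=; case: ifP => // /andP [hv hk]; rewrite subr_le0; exact: c2.
- by case=> [[[z j] l] l'] /=; case: ifP => // hl; rewrite subr_le0; exact: m1.
- by case=> [[[z k] l] l'] /=; case: ifP => // /andP [hk hl]; rewrite subr_le0; exact: m2.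
- by case=> [[[z l] j] n] /=; case: ifP => // hn; rewrite subr_le0 /YREC (dget_true hn).
- by case=> [[[z l] k] n] /=; case: ifP => // hn; rewrite subr_le0 /YCP (dget_true hn).
Qed.

Lemma polyhedron_feasible x : polyhedron model_equations constraints x -> feasible x.
Proof.
case=> -[e1 [e2 [e3 [e4 [e5 [e6 [e7 e8]]]]]]].
rewrite /constraints all_nonpos_sum => -[/nonneg_constraintsE x_ge0].
rewrite /capacity_constraints !all_nonpos_sum => -[c1 [c2 [m1 [m2 [b1 b2]]]]].
do 9 (split=> //); repeat split.
- move=> w t z j hv; have := c1 (w, Ordinal (valid_lt hv), z, j).
  by rewrite /= hv subr_le0.
- move=> w t z k hv hk; have := c2 (w, Ordinal (valid_lt hv), z, k).
  by rewrite /= hv hk subr_le0.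
- by move=> z j l l' hl; have := m1 (z, j, l, l'); rewrite /= hl subr_le0.
- by move=> z k l l' hk hl; have := m2 (z, k, l, l'); rewrite /= hl hk subr_le0.
- move=> z l j n h; have := b1 (z, l, j, n).
  by rewrite /= h subr_le0 /YREC (dget_true h).
- move=> z l k n h; have := b2 (z, l, k, n).
  by rewrite /= h subr_le0 /YCP (dget_true h).
Qed.

End ModelPolyhedron.

Lemma feasibleE (R : realType) (M : model R) :
  @feasible R M = polyhedron (@model_equations R M) (@constraints R M).
Proof.
apply: funext => x; apply: propext.
by split; [exact: feasible_polyhedron | exact: polyhedron_feasible].
Qed.

Section Objective.
Variables (R : realType) (M : model R).
Local Notation X := (var M -> R).

Lemma reading_ge0 (x : X) (b : bool) (v : b = true -> var M) :
  feasible x -> 0 <= dget (fun h => x (v h)).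
Proof. by case=> x_ge0 _; apply: dget_ge0. Qed.

Ltac nonneg_tac := repeat first [ apply: addr_ge0 | apply: sumr_ge0 => ? _ | apply: mulr_ge0
  | apply: reading_ge0 | done ].

Lemma affine_Cop w t : affine (fun x : X => Cop x w t).
Proof. by rewrite /Cop; affine_tac. Qed.

Hypothesis gamma_lt1 : gamma M < 1.
Hypothesis prob_ge0 : forall w, 0 <= prob M w.
Hypothesis fREC_ok : forall z j, concave_nonneg (fREC M z j) /\
  nondecreasing_nonneg (fREC M z j) /\ fREC M z j 0 = 0.
Hypothesis fCP_ok : forall z k, concave_nonneg (fCP M z k) /\
  nondecreasing_nonneg (fCP M z k) /\ fCP M z k 0 = 0.

Lemma discount_ge0 n : 0 <= (1 - gamma M) ^+ n.
Proof. by apply: exprn_ge0; rewrite subr_ge0 ltW. Qed.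

Lemma objective_concave : concave_on (@feasible R M) (@objective R M).
Proof.
have feasible_ge0 (x : X) : feasible x -> forall v, 0 <= x v by case.
rewrite /objective; apply: concave_on_sum => t.
apply: concave_onMl; first exact: discount_ge0.
apply: concave_onD.
  rewrite /Cpl; apply: concave_on_sum => z.
  apply: concave_onD; apply: concave_on_sum => c; apply: concave_on_sum => n.
    rewrite /YREC; apply: (concave_on_dget (phi := fREC M z c)) => //.
    by case: (fREC_ok z c).
  rewrite /YCP; apply: (concave_on_dget (phi := fCP M z c)) => //.
  by case: (fCP_ok z c).
apply: concave_on_sum => w; apply: concave_onMl => //.
exact/concave_on_affine/affine_Cop.
Qed.

Lemma Cpl_ge0 (x : X) t : feasible x -> 0 <= Cpl x t.
Proof.
move=> Fx; rewrite /Cpl; apply: sumr_ge0 => z _; apply: addr_ge0.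
  apply: sumr_ge0 => j _; apply: sumr_ge0 => n _.
  have [_ [mon f0]] := fREC_ok z j; rewrite -f0; apply: mon => //; exact: reading_ge0.
apply: sumr_ge0 => k _; apply: sumr_ge0 => n _.
have [_ [mon f0]] := fCP_ok z k; rewrite -f0; apply: mon => //; exact: reading_ge0.
Qed.

Hypothesis DeltaREC_ge0 : forall k i j, 0 <= DeltaREC M k i j.
Hypothesis uREC_gt0 : 0 < uREC M.

Definition recycling_cap t k :=
  \sum_(i : In M) \sum_(j : Jn M) DeltaREC M k i j * \sum_(n in NREC M (lt M t)) uREC M.

Lemma recycling_cap_ge0 t k : 0 <= recycling_cap t k.
Proof. by nonneg_tac; exact: ltW. Qed.

Lemma RMS_le_recycling_cap (x : X) w t z k :
  feasible x -> RMS x w t z k <= recycling_cap t k.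
Proof.
move=> Fx; have [_ [_ [_ [_ [_ [e5 [_ [_ [_ [cap [_ [_ [_ [ub _]]]]]]]]]]]]]] := Fx.
case hv: (valid w t); last by rewrite /RMS dget_false ?recycling_cap_ge0.
apply: (@le_trans _ _ (RMINV x w t z k + RMS x w t z k)).
  by rewrite lerDr; exact: reading_ge0.
rewrite e5 //; apply: ler_sum => i _; apply: ler_sum => j _; apply: ler_wpM2l => //.
apply: (@le_trans _ _ (\sum_(i' : In M) RBRM x w t z i' j)).
  by rewrite (bigD1 i) //= lerDl; nonneg_tac.
apply: (le_trans (cap _ _ _ j hv)); apply: ler_sum => n nREC.
by rewrite /YREC (dget_true nREC).
Qed.

Hypothesis cNBNM_ge0 : forall w t k, 0 <= cNBNM M w t k.
Hypothesis cCPNM_ge0 : forall w t k, 0 <= cCPNM M w t k.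
Hypothesis cMC_ge0 : forall w z t k, 0 <= cMC M w z t k.
Hypothesis vv_ge0 : forall w t k, 0 <= vv M w t k.
Hypothesis cCP_ge0 : forall w z t k, 0 <= cCP M w z t k.
Hypothesis cREC_ge0 : forall w z t i j, 0 <= cREC M w z t i j.
Hypothesis cTRRM_ge0 : forall z z', 0 <= cTRRM M z z'.
Hypothesis cTRRB_ge0 : forall z z', 0 <= cTRRB M z z'.
Hypothesis rho_ge0 : 0 <= rho M.
Hypothesis eta_ge0 : 0 <= Defs.eta M.

Lemma Cop_lower_bound (x : X) w t : feasible x ->
  - \sum_(z : Zn M) \sum_(k : Kn M) vv M w t k * (Defs.eta M * recycling_cap t k)
    <= Cop x w t.
Proof.
move=> Fx; rewrite /Cop -sumrN; apply: ler_sum => z _.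
do 3 (apply: ler_wpDr; first by nonneg_tac).
apply: ler_wpDl; first by nonneg_tac.
rewrite -sumrN; apply: ler_sum => k _; rewrite -mulrN; apply: ler_wpM2l => //.
have : Defs.eta M * RMS x w t z k <= Defs.eta M * recycling_cap t k.
  by apply: ler_wpM2l => //; exact: RMS_le_recycling_cap.
have : 0 <= rho M * INV x w t z k by nonneg_tac.
lra.
Qed.

Lemma objective_bounded_below : exists K, forall x : X, feasible x -> K <= objective x.
Proof.
exists (\sum_(1 <= t < (T M).+1) (1 - gamma M) ^+ t.-1 *
   (0 + \sum_(w : Om M | nstage M w == stage M t) prob M w *
      - \sum_(z : Zn M) \sum_(k : Kn M) vv M w t k * (Defs.eta M * recycling_cap t k))).
move=> x Fx; apply: ler_sum => t _; apply: ler_wpM2l; first exact: discount_ge0.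
apply: lerD; first exact: Cpl_ge0.
by apply: ler_sum => w _; apply: ler_wpM2l => //; exact: Cop_lower_bound.
Qed.

End Objective.

Section NoRecyclingPlan.
Variables (R : realType) (M : model R).

Hypothesis DeltaNB_ge0 : forall i k, 0 <= DeltaNB M i k.
Hypothesis dem_ge0 : forall w z t i, 0 <= dem M w z t i.
Hypothesis sup_ge0 : forall w z t i, 0 <= Defs.sup M w z t i.
Hypothesis uREC_gt0 : 0 < uREC M.
Hypothesis uCP_gt0 : 0 < uCP M.

Fixpoint collected (w : Om M) (t : nat) (z : Zn M) (i : In M) : R :=
  if t is t'.+1 then
    (if valid (anc M w t') t' then collected (anc M w t') t' z i else 0) + Defs.sup M w z t i
  else 0.

Definition no_recycling_plan (v : var M) : R :=
  match v with
  | vNMNB w t z k _ => \sum_(i : In M) DeltaNB M i k * dem M w z t i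
  | vRB w t z i _ => collected w t z i
  | _ => 0
  end.

Lemma collected_ge0 t w z i : 0 <= collected w t z i.
Proof. by elim: t w => //= t IH w; rewrite addr_ge0 //; case: ifP. Qed.

Lemma no_recycling_plan_feasible : feasible no_recycling_plan.
Proof.
rewrite /feasible; unfold_vars; split.
  by case=> //= *; [apply: sumr_ge0 => i _; apply: mulr_ge0 | exact: collected_ge0].
split; first by move=> w t z k hv _; rewrite (dget_true hv) dget0 addr0.
split; first by move=> w t z k hv _; rewrite (dget_true hv).
split; first by move=> *; rewrite !dget0 addr0 big1 // => *; rewrite ?dget0 mulr0.
split; first by move=> *; rewrite dget0 big1 // => *; rewrite ?dget0 mulr0.
split; first by move=> *; rewrite !dget0 addr0 big1 // => *; rewrite big1 // => *; rewrite mulr0.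
split.
  move=> w [|t] z i hv; first by case/andP: hv => /andP [].
  rewrite (dget_true hv) big1; last by move=> z' _; rewrite !dget0 subrr.
  rewrite big1; last by move=> j _; exact: dget0.
  by rewrite addr0 subr0 /= /dget; case: (valid _ t).
split; first by move=> *; rewrite !dget0 big1 ?subr0 ?addr0 // => *; rewrite !dget0 subrr.
split; first by move=> *; rewrite !dget0 big1 ?subr0 ?addr0 // => *; rewrite !dget0 subrr.
split; first by move=> *; rewrite !big1 // => *; rewrite dget0.
split; first by move=> *; rewrite dget0 big1 // => *; rewrite dget0.
split; first by move=> *; rewrite !big1 // => *; rewrite dget0.
split; first by move=> *; rewrite !big1 // => *; rewrite dget0.
by split=> *; apply: ltW.
Qed.

End NoRecyclingPlan.

Theorem proposition2 (R : realType) (M : model R) :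
  model_assumption M ->
  (exists x : var M -> R, feasible x) /\
  (exists x : var M -> R,
     extreme_point (@feasible R M) x /\
     forall x' : var M -> R, feasible x' -> objective x <= objective x').
Proof.
case=> hNB [_ [_ [hREC [hdem [hsup [hNBNM [hCPNM [hMC [hvv [hCP [hcREC [hTRRM [hTRRB [hprob
  [/andP [hrho _] [/andP [heta _] [huREC [huCP [/andP [_ hgamma] [hfREC hfCP]]]]]]]]]]]]]]]]]]]].
have F0 := no_recycling_plan_feasible hNB hdem hsup huREC huCP.
have cav := objective_concave hgamma hprob hfREC hfCP.
have bnd : exists K, forall x : var M -> R, feasible x -> K <= objective x.
  by apply: objective_bounded_below.
split; first by exists (no_recycling_plan (M := M)).
rewrite feasibleE in F0 cav bnd *.
apply: concave_min_at_extreme_point => //; last by exists (no_recycling_plan (M := M)).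
- exact: model_equations_line.
- exact: affine_constraints.
- by apply: nonneg_line_free => x; rewrite -feasibleE; case.
Qed.
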